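(* Let $A,B,C$ be distinct transfer matrices, i.e. distinct matrices of the form $\begin{bmatrix}t&-1\\1&0\end{bmatrix}$ with $t\in\mathbb{R}$. If $AB$ and $AC$ are hyperbolic, then $AB$ and $AC$ have no common eigenvector. Similarly, if $BA$ and $CA$ are hyperbolic, then $BA$ and $CA$ have no common eigenvector.
   Context: A matrix in $SL(2,\mathbb{R})$ is hyperbolic if the absolute value of its trace is greater than $2$. Two matrices share an eigenvector if some nonzero vector is an eigenvector of both (possibly for different eigenvalues). *)

From mathcomp Require Import all_boot all_order all_algebra.
From mathcomp Require Import reals.
Set Implicit Arguments. Unset Strict Implicit. Unset Printing Implicit Defensive.
Import Order.TTheory GRing.Theory Num.Theory.
Local Open Scope ring_scope.

Definition transfer {R : realType} (t : R) : 'M[R]_2 :=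
  \matrix_(i < 2, j < 2)
    (if i == 0 then (if j == 0 then t else -1) else (if j == 0 then 1 else 0)).

Definition is_transfer {R : realType} (M : 'M[R]_2) : Prop :=
  exists t : R, M = transfer t.

(* Hyperbolic element of SL(2,R): |trace| > 2 (the transfer matrices and their
   products have determinant 1). *)
Definition hyperbolic {R : realType} (M : 'M[R]_2) : Prop := 2 < `|\tr M|.

Definition eigenvector {R : realType} (M : 'M[R]_2) (v : 'cV[R]_2) : Prop :=
  v != 0 /\ exists lambda : R, M *m v = lambda *: v.

Definition share_eigenvector {R : realType} (M N : 'M[R]_2) : Prop :=
  exists v : 'cV[R]_2, eigenvector M v /\ eigenvector N v.

(** Conjugation by the invertible [A] maps [BA] to [AB] and preserves the
    trace, so the claim about [BA] and [CA] reduces to the one about [AB] and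
    [AC]. For [A], [B], [C] the transfer matrices of [a], [b], [c] one has
    [AB - AC = (b - c) A E], where [E] projects onto the first coordinate; so
    if [v = (x, y)] is an eigenvector of both, for eigenvalues [l] and [m],
    then [(l - m) v = (b - c) x (a, 1)]. Hence either [x = 0] or [v] is
    proportional to [(a, 1)], and in both cases the eigen-equations of [AB]
    force [a = 0]. But then [\tr (AB) = ab - 2 = -2], so [AB] is not
    hyperbolic. *)

From mathcomp Require Import all_boot all_order all_algebra.
From mathcomp Require Import reals.
From mathcomp Require Import ring lra.
Set Implicit Arguments. Unset Strict Implicit.
Import Order.TTheory GRing.Theory Num.Theory.
Local Open Scope ring_scope.

Lemma big_ord2 (V : nmodType) (F : 'I_2 -> V) : \sum_(i < 2) F i = F 0 + F 1.
Proof. by rewrite big_ord_recl big_ord1; congr (_ + F _); apply: val_inj. Qed.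

Lemma mulmx_cV2E (R : pzSemiRingType) (M : 'M[R]_2) (v : 'cV[R]_2) i :
  (M *m v) i 0 = M i 0 * v 0 0 + M i 1 * v 1 0.
Proof. by rewrite mxE big_ord2. Qed.

Lemma cV2_neq0 (V : nmodType) (v : 'cV[V]_2) : v != 0 -> v 0 0 != 0 \/ v 1 0 != 0.
Proof.
move=> vn0; apply/orP; apply: contraNT vn0.
rewrite negb_or !negbK => /andP[/eqP v0 /eqP v1].
apply/eqP/matrixP => i j; rewrite mxE (ord1 j).
by case: i => [[|[|//]] i2]; [rewrite -v0 | rewrite -v1]; congr (v _ _); apply: val_inj.
Qed.

Section Eigenvectors.
Variable R : realType.
Implicit Types (A B C M N : 'M[R]_2) (v : 'cV[R]_2).

Lemma eigenvector_mulC M N v :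
  N \in unitmx -> eigenvector (M *m N) v -> eigenvector (N *m M) (N *m v).
Proof.
move=> Nu [vn0 [l Ev]]; split.
  by apply: contra vn0 => /eqP Nv0; rewrite -(mulKmx Nu v) Nv0 mulmx0.
by exists l; rewrite -mulmxA (mulmxA M) Ev scalemxAr.
Qed.

Lemma share_eigenvector_mulC A B C : A \in unitmx ->
  share_eigenvector (B *m A) (C *m A) -> share_eigenvector (A *m B) (A *m C).
Proof.
move=> Au [v [EBv ECv]].
by exists (A *m v); split; apply: eigenvector_mulC.
Qed.

Lemma hyperbolic_mulC M N : hyperbolic (M *m N) -> hyperbolic (N *m M).
Proof. by rewrite /hyperbolic mxtrace_mulC. Qed.

End Eigenvectors.

Section Transfer.
Variable R : realType.
Implicit Types (a b c t l m x y : R) (v : 'cV[R]_2).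

Lemma transfer_unitmx t : transfer t \in unitmx.
Proof.
pose Tinv : 'M[R]_2 := \matrix_(i < 2, j < 2)
  (if i == 0 then (if j == 0 then 0 else 1) else (if j == 0 then -1 else t)).
suff /mulmx1_unit[] : transfer t *m Tinv = 1%:M by [].
apply/matrixP => i j; rewrite !mxE big_ord2 !mxE.
by case: i j => [[|[|//]] i2] [[|[|//]] j2] /=; ring.
Qed.

Lemma transfer_mul_eigenE a b l v :
  transfer a *m transfer b *m v = l *: v ->
  (a * b - 1) * v 0 0 - a * v 1 0 = l * v 0 0 /\ b * v 0 0 - v 1 0 = l * v 1 0.
Proof.
move=> Ev; have := congr1 (fun w : 'cV_2 => (w 0 0, w 1 0)) Ev.
rewrite !mulmx_cV2E !mxE !big_ord2 !mxE /= => -[e0 e1].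
by split; [rewrite -e0 | rewrite -e1]; ring.
Qed.

Lemma mxtrace_transfer_mul a b : \tr (transfer a *m transfer b) = a * b - 2.
Proof. by rewrite /mxtrace big_ord2 !mxE !big_ord2 !mxE /=; ring. Qed.

Lemma transfer0_mul_not_hyperbolic b : ~ hyperbolic (transfer 0 *m transfer b).
Proof.
by rewrite /hyperbolic mxtrace_transfer_mul mul0r sub0r normrN normr_nat ltxx.
Qed.

Lemma transfer_common_eigen_eq0 a b c l m x y : b != c -> (x != 0 \/ y != 0) ->
  (a * b - 1) * x - a * y = l * x -> b * x - y = l * y ->
  (a * c - 1) * x - a * y = m * x -> c * x - y = m * y -> a = 0.
Proof.
move=> bc xy0 e1 e2 e3 e4.
have bc0 : b - c != 0 by rewrite subr_eq0.
have dx : (l - m) * x = a * ((b - c) * x) by lra.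
have dy : (l - m) * y = (b - c) * x by lra.
have /eqP : (l - m) * (x - a * y) = 0 by rewrite mulrBr mulrCA dy dx subrr.
rewrite mulf_eq0 !subr_eq0 => /orP[/eqP lm | /eqP xay].
  have /eqP : (b - c) * x = 0 by rewrite -dy lm subrr mul0r.
  rewrite mulf_eq0 (negbTE bc0) => /eqP x0.
  have y0 : y != 0 by case: xy0 => //; rewrite x0 eqxx.
  by apply/(mulIf y0); rewrite mul0r; move: e1; rewrite x0; lra.
have y0 : y != 0 by case: xy0 => //; apply: contraNneq => y0; rewrite xay y0 mulr0.
have ly : l * y = (a * b - 1) * y by rewrite -e2 xay; ring.
have {}ly : l = a * b - 1 by apply: (mulIf y0).
by apply/(mulIf y0); rewrite mul0r; move: e1; rewrite ly xay; lra.
Qed.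

Lemma transfer_share_eigenvector_eq0 a b c : b != c ->
  share_eigenvector (transfer a *m transfer b) (transfer a *m transfer c) -> a = 0.
Proof.
move=> bc [v [[vn0 [l /transfer_mul_eigenE[e1 e2]]] [_ [m /transfer_mul_eigenE[e3 e4]]]]].
exact: (transfer_common_eigen_eq0 bc (cV2_neq0 vn0) e1 e2 e3 e4).
Qed.

Lemma transfer_mul_no_common_eigenvector a b c : b != c ->
  hyperbolic (transfer a *m transfer b) ->
  ~ share_eigenvector (transfer a *m transfer b) (transfer a *m transfer c).
Proof.
by move=> bc hAB /(transfer_share_eigenvector_eq0 bc) a0;
  move: hAB; rewrite a0; apply: transfer0_mul_not_hyperbolic.
Qed.

End Transfer.

Theorem lemma5 (R : realType) (A B C : 'M[R]_2) :
  is_transfer A -> is_transfer B -> is_transfer C ->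
  A != B -> A != C -> B != C ->
  (hyperbolic (A *m B) -> hyperbolic (A *m C) ->
     ~ share_eigenvector (A *m B) (A *m C)) /\
  (hyperbolic (B *m A) -> hyperbolic (C *m A) ->
     ~ share_eigenvector (B *m A) (C *m A)).
Proof.
move=> [a ->] [b ->] [c ->] _ _ BC.
have bc : b != c by apply: contraNneq BC => ->.
split=> [hAB _ | hBA _ /(share_eigenvector_mulC (transfer_unitmx a))].
  exact: transfer_mul_no_common_eigenvector.
exact/(transfer_mul_no_common_eigenvector bc)/hyperbolic_mulC.
Qed.
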